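(* Let $M\in\mathrm{SL}(3,\mathbb R)$, $\mathcal D=\mathbb S_1^1$, $K=\mathcal G_{\mathcal D}(M)$, and let $(u_1,\vec v_1),\dots,(u_K,\vec v_K)\in\mathcal Q_{\mathcal D}(M)$ satisfy (V1)–(V3) and $u_i\ge0$ for all $i$. Then for all $1\le i<j\le K-1$ we have $|\vec v_i-\vec v_j|>|\vec v_j|$, and for all $1\le i<j<k\le K-1$ we have $|\vec v_i-\vec v_j-\vec v_k|\ge|\vec v_k|$.
   Context: Row vectors in $\mathbb R^3$ are written $(u,\vec v)$, $u\in\mathbb R$, $\vec v\in\mathbb R^2$; $\mathbb Z^3M=\{\vec mM:\vec m\in\mathbb Z^3\}$. For $\mathcal D\subseteq\mathbb S_1^1$ (unit circle): $\mathcal Q_{\mathcal D}(M,t)=\{(u,\vec v)\in\mathbb Z^3M:-t<u<1-t,\ \vec v\in\mathbb R_{>0}\mathcal D\}$ for $t\in(0,1)$; $\mathcal Q_{\mathcal D}(M)=\{(u,\vec v)\in\mathbb Z^3M:|u|<1,\ \vec v\in\mathbb R_{>0}\mathcal D\}$; $F_{\mathcal D}(M,t)=\min\{|\vec v|:(u,\vec v)\in\mathcal Q_{\mathcal D}(M,t)\}$; $\mathcal F_{\mathcal D}(M)=\{F_{\mathcal D}(M,t):0<t<1\}$ and $\mathcal G_{\mathcal D}(M)=|\mathcal F_{\mathcal D}(M)|$. Conditions: (V1) $0<|\vec v_1|<\cdots<|\vec v_K|$; (V2) each $\delta\in\mathcal F_{\mathcal D}(M)$ equals $|\vec v_i|$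 for some $i$; (V3) for each $i$ there is $t\in(0,1)$ with $(u_i,\vec v_i)\in\mathcal Q_{\mathcal D}(M,t)$ and $|\vec v_i|=F_{\mathcal D}(M,t)$. (For $\mathcal D=\mathbb S_1^1$, replacing $(u_i,\vec v_i)$ by its negative, one may always arrange $u_i\ge0$.) *)

From Stdlib Require Import Reals List.
Open Scope R_scope.

(* A real 3x3 matrix, entries M i j with i, j in {0,1,2}. *)
Definition mat3 := nat -> nat -> R.

Definition det3 (M : mat3) : R :=
    M 0%nat 0%nat * (M 1%nat 1%nat * M 2%nat 2%nat - M 1%nat 2%nat * M 2%nat 1%nat)
  - M 0%nat 1%nat * (M 1%nat 0%nat * M 2%nat 2%nat - M 1%nat 2%nat * M 2%nat 0%nat)
  + M 0%nat 2%nat * (M 1%nat 0%nat * M 2%nat 1%nat - M 1%nat 1%nat * M 2%nat 0%nat).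

Definition SL3 (M : mat3) : Prop := det3 M = 1.

Definition rowmul (a b c : Z) (M : mat3) (j : nat) : R :=
  IZR a * M 0%nat j + IZR b * M 1%nat j + IZR c * M 2%nat j.

(* (u, (v1,v2)) lies in Z^3 M *)
Definition in_lattice (M : mat3) (u v1 v2 : R) : Prop :=
  exists a b c : Z, u = rowmul a b c M 0 /\ v1 = rowmul a b c M 1 /\ v2 = rowmul a b c M 2.

Definition norm2 (x y : R) : R := sqrt (x ^ 2 + y ^ 2).

Definition unit_circle (x y : R) : Prop := x ^ 2 + y ^ 2 = 1.

Definition in_cone (D : R -> R -> Prop) (x y : R) : Prop :=
  exists r d1 d2, 0 < r /\ D d1 d2 /\ x = r * d1 /\ y = r * d2.

Definition Qt (D : R -> R -> Prop) (M : mat3) (t u v1 v2 : R) : Prop :=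
  in_lattice M u v1 v2 /\ - t < u < 1 - t /\ in_cone D v1 v2.

Definition Q (D : R -> R -> Prop) (M : mat3) (u v1 v2 : R) : Prop :=
  in_lattice M u v1 v2 /\ Rabs u < 1 /\ in_cone D v1 v2.

(* "F_D(M,t) = delta": delta is the minimum of |v| over Q_D(M,t) (attained). *)
Definition is_F (D : R -> R -> Prop) (M : mat3) (t delta : R) : Prop :=
  (exists u v1 v2, Qt D M t u v1 v2 /\ norm2 v1 v2 = delta) /\
  (forall u v1 v2, Qt D M t u v1 v2 -> delta <= norm2 v1 v2).

Definition Fset (D : R -> R -> Prop) (M : mat3) (delta : R) : Prop :=
  exists t, 0 < t < 1 /\ is_F D M t delta.

Definition has_card (S : R -> Prop) (K : nat) : Prop :=
  exists l : list R, NoDup l /\ length l = K /\ (forall x, In x l <-> S x).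

From Stdlib Require Import Reals List Lra Lia.
Open Scope R_scope.

(* For i < j, neither (u_i, v_i) nor its negative may lie in Q(t) when t
   realises |v_j|, since |v_i| < |v_j|; with 0 <= u_i < 1 this forces
   1 - u_i <= t <= u_i.  Applied to t_K this gives u_i >= 1/2 for i < K, and
   applied to t_j (where u_j < 1 - t_j) it gives u_j < u_i.  Hence for
   i < j < K the lattice point (u_i - u_j, v_i - v_j) has first coordinate in
   (0, 1/2), so it lies in Q(t_K) and |v_i - v_j| >= |v_K| > |v_j|; and
   -(u_i - u_j - u_k, v_i - v_j - v_k) has first coordinate in (0, 1 - t_k),
   so it lies in Q(t_k) and |v_i - v_j - v_k| >= |v_k|. *)

Lemma in_lattice_sub M a x y b z w :
  in_lattice M a x y -> in_lattice M b z w -> in_lattice M (a - b) (x - z) (y - w).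
Proof.
  intros (p & q & r & -> & -> & ->) (p' & q' & r' & -> & -> & ->).
  exists (p - p')%Z, (q - q')%Z, (r - r')%Z; unfold rowmul.
  rewrite !minus_IZR; repeat split; ring.
Qed.

Lemma in_lattice_opp M a x y : in_lattice M a x y -> in_lattice M (- a) (- x) (- y).
Proof.
  intros (p & q & r & -> & -> & ->).
  exists (- p)%Z, (- q)%Z, (- r)%Z; unfold rowmul.
  rewrite !opp_IZR; repeat split; ring.
Qed.

Lemma norm2_opp x y : norm2 (- x) (- y) = norm2 x y.
Proof. unfold norm2; f_equal; ring. Qed.

Lemma in_cone_unit_circle x y : ~ (x = 0 /\ y = 0) -> in_cone unit_circle x y.
Proof.
  intros Hnz.
  assert (Hs : 0 < x ^ 2 + y ^ 2).
  { assert (Hsq : forall z, z <> 0 -> 0 < z ^ 2)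
      by (intros z Hz; rewrite <- Rsqr_pow2; now apply Rsqr_pos_lt).
    pose proof (pow2_ge_0 x); pose proof (pow2_ge_0 y).
    destruct (Req_dec x 0) as [Hx | Hx].
    - assert (Hy : y <> 0) by tauto; pose proof (Hsq y Hy); lra.
    - pose proof (Hsq x Hx); lra. }
  set (r := norm2 x y).
  assert (Hr : 0 < r) by (apply sqrt_lt_R0; exact Hs).
  assert (Hr2 : r ^ 2 = x ^ 2 + y ^ 2) by (apply pow2_sqrt; lra).
  exists r, (x / r), (y / r); repeat split.
  - exact Hr.
  - unfold unit_circle; replace ((x / r) ^ 2 + (y / r) ^ 2) with ((x ^ 2 + y ^ 2) / r ^ 2)
      by (field; lra).
    rewrite Hr2; field; lra.
  - field; lra.
  - field; lra.
Qed.

Lemma is_F_le_norm2 M t delta a x y :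
  is_F unit_circle M t delta -> in_lattice M a x y -> ~ (x = 0 /\ y = 0) ->
  (- t < a < 1 - t \/ - t < - a < 1 - t) -> delta <= norm2 x y.
Proof.
  intros [_ Hmin] Hlat Hnz [Ha | Ha].
  - apply (Hmin a); repeat split; try apply in_cone_unit_circle; tauto.
  - rewrite <- norm2_opp; apply (Hmin (- a)); repeat split; try tauto.
    + now apply in_lattice_opp.
    + apply in_cone_unit_circle; lra.
Qed.

Section IncreasingMinima.

Variables (M : mat3) (K : nat) (u v1 v2 : nat -> R).

Let N i := norm2 (v1 i) (v2 i).

Hypothesis lattice_pts : forall i, (1 <= i <= K)%nat -> in_lattice M (u i) (v1 i) (v2 i).
Hypothesis u_bounds : forall i, (1 <= i <= K)%nat -> 0 <= u i < 1.
Hypothesis norm_pos : forall i, (1 <= i <= K)%nat -> 0 < N i.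
Hypothesis norm_succ : forall i, (1 <= i < K)%nat -> N i < N (S i).
Hypothesis realised : forall i, (1 <= i <= K)%nat -> exists t, 0 < t < 1 /\
  Qt unit_circle M t (u i) (v1 i) (v2 i) /\ is_F unit_circle M t (N i).

Lemma norm_incr i j : (1 <= i)%nat -> (i < j <= K)%nat -> N i < N j.
Proof.
  intros Hi Hij; induction j as [| j IH]; [lia |].
  destruct (Nat.eq_dec i j) as [-> | Hne].
  - apply norm_succ; lia.
  - apply Rlt_trans with (N j); [apply IH | apply norm_succ]; lia.
Qed.

Lemma norm_nonzero i : (1 <= i <= K)%nat -> ~ (v1 i = 0 /\ v2 i = 0).
Proof.
  intros Hi [E1 E2]; pose proof (norm_pos i Hi) as Hp.
  unfold N, norm2 in Hp; rewrite E1, E2, pow_i, Rplus_0_r, sqrt_0 in Hp by lia; lra.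
Qed.

Lemma sub_nonzero i j : (1 <= i)%nat -> (i < j <= K)%nat ->
  ~ (v1 i - v1 j = 0 /\ v2 i - v2 j = 0).
Proof.
  intros Hi Hij [E1 E2]; pose proof (norm_incr i j Hi Hij) as Hlt.
  unfold N in Hlt; replace (v1 j) with (v1 i) in Hlt by lra.
  replace (v2 j) with (v2 i) in Hlt by lra; lra.
Qed.

Lemma realising_t_bounds i j t : (1 <= i)%nat -> (i < j <= K)%nat -> 0 < t < 1 ->
  is_F unit_circle M t (N j) -> 1 - u i <= t <= u i.
Proof.
  intros Hi Hij Ht HF.
  pose proof (u_bounds i ltac:(lia)).
  pose proof (norm_incr i j Hi Hij).
  assert (Havail : - t < u i < 1 - t \/ - t < - u i < 1 - t -> False).
  { intros Ha.
    assert (N j <= N i)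
      by (eapply is_F_le_norm2; [exact HF | apply lattice_pts | apply norm_nonzero | exact Ha];
          lia).
    lra. }
  destruct (Rlt_or_le t (1 - u i)), (Rlt_or_le (u i) t); try lra;
    exfalso; apply Havail; first [left; lra | right; lra].
Qed.

Lemma u_ge_half i : (1 <= i < K)%nat -> 1 / 2 <= u i.
Proof.
  intros Hi; destruct (realised K ltac:(lia)) as (t & Ht & _ & HF).
  pose proof (realising_t_bounds i K t ltac:(lia) ltac:(lia) Ht HF); lra.
Qed.

Lemma u_decr i j : (1 <= i)%nat -> (i < j <= K)%nat -> u j < u i.
Proof.
  intros Hi Hij; destruct (realised j ltac:(lia)) as (t & Ht & (_ & Hu & _) & HF).
  pose proof (realising_t_bounds i j t Hi Hij Ht HF); lra.
Qed.

Lemma norm_sub_ge_last i j : (1 <= i)%nat -> (i < j)%nat -> (j < K)%nat ->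
  N K <= norm2 (v1 i - v1 j) (v2 i - v2 j).
Proof.
  intros Hi Hij HjK; destruct (realised K ltac:(lia)) as (t & Ht & _ & HF).
  pose proof (u_ge_half j ltac:(lia)); pose proof (u_bounds i ltac:(lia)).
  pose proof (u_decr i j Hi ltac:(lia)).
  eapply is_F_le_norm2; [exact HF | apply in_lattice_sub; apply lattice_pts; lia |
    apply sub_nonzero; lia | ].
  destruct (Rlt_or_le t (1 / 2)); [left | right]; lra.
Qed.

Lemma norm_sub_gt i j : (1 <= i)%nat -> (i < j)%nat -> (j < K)%nat ->
  N j < norm2 (v1 i - v1 j) (v2 i - v2 j).
Proof.
  intros Hi Hij HjK; pose proof (norm_sub_ge_last i j Hi Hij HjK).
  pose proof (norm_incr j K ltac:(lia) ltac:(lia)); lra.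
Qed.

Lemma norm_sub_sub_ge i j k : (1 <= i)%nat -> (i < j)%nat -> (j < k)%nat -> (k < K)%nat ->
  N k <= norm2 (v1 i - v1 j - v1 k) (v2 i - v2 j - v2 k).
Proof.
  intros Hi Hij Hjk HkK.
  assert (Hnz : ~ (v1 i - v1 j - v1 k = 0 /\ v2 i - v2 j - v2 k = 0)).
  { intros [E1 E2].
    pose proof (norm_sub_ge_last i j Hi Hij ltac:(lia)).
    pose proof (norm_incr k K ltac:(lia) ltac:(lia)).
    unfold N in *; replace (v1 i - v1 j) with (v1 k) in * by lra.
    replace (v2 i - v2 j) with (v2 k) in * by lra; lra. }
  destruct (realised k ltac:(lia)) as (t & Ht & (_ & Hu & _) & HF).
  pose proof (u_ge_half j ltac:(lia)); pose proof (u_ge_half k ltac:(lia)).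
  pose proof (u_bounds i ltac:(lia)); pose proof (u_decr i j Hi ltac:(lia)).
  apply (is_F_le_norm2 M t _ (u i - u j - u k)); [exact HF | | exact Hnz | right; lra].
  apply in_lattice_sub; [apply in_lattice_sub |]; apply lattice_pts; lia.
Qed.

End IncreasingMinima.

Theorem proposition5p2 (M : mat3) (K : nat) (u v1 v2 : nat -> R) :
  SL3 M ->
  has_card (Fset unit_circle M) K ->
  (forall i, (1 <= i <= K)%nat -> Q unit_circle M (u i) (v1 i) (v2 i)) ->
  (* (V1) *)
  (forall i, (1 <= i <= K)%nat -> 0 < norm2 (v1 i) (v2 i)) ->
  (forall i, (1 <= i < K)%nat -> norm2 (v1 i) (v2 i) < norm2 (v1 (S i)) (v2 (S i))) ->
  (* (V2) *)
  (forall delta, Fset unit_circle M delta ->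
     exists i, (1 <= i <= K)%nat /\ delta = norm2 (v1 i) (v2 i)) ->
  (* (V3) *)
  (forall i, (1 <= i <= K)%nat -> exists t, 0 < t < 1 /\
     Qt unit_circle M t (u i) (v1 i) (v2 i) /\ is_F unit_circle M t (norm2 (v1 i) (v2 i))) ->
  (forall i, (1 <= i <= K)%nat -> 0 <= u i) ->
  (forall i j, (1 <= i)%nat -> (i < j)%nat -> (j <= K - 1)%nat ->
     norm2 (v1 i - v1 j) (v2 i - v2 j) > norm2 (v1 j) (v2 j)) /\
  (forall i j k, (1 <= i)%nat -> (i < j)%nat -> (j < k)%nat -> (k <= K - 1)%nat ->
     norm2 (v1 i - v1 j - v1 k) (v2 i - v2 j - v2 k) >= norm2 (v1 k) (v2 k)).
Proof.
  intros _ _ HQ Hpos Hsucc _ Hreal Hu.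
  assert (Hlat : forall i, (1 <= i <= K)%nat -> in_lattice M (u i) (v1 i) (v2 i))
    by (intros i Hi; apply HQ, Hi).
  assert (Hub : forall i, (1 <= i <= K)%nat -> 0 <= u i < 1).
  { intros i Hi; destruct (HQ i Hi) as (_ & Habs & _).
    apply Rabs_def2 in Habs; pose proof (Hu i Hi); lra. }
  split.
  - intros i j Hi Hij HjK.
    apply (norm_sub_gt M K u v1 v2 Hlat Hub Hpos Hsucc Hreal); lia.
  - intros i j k Hi Hij Hjk HkK; apply Rle_ge.
    apply (norm_sub_sub_ge M K u v1 v2 Hlat Hub Hpos Hsucc Hreal); lia.
Qed.
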